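(* Let $\mathbb{F}$ be a field, let $n \ne 1$ and $r \le n+1$, and let $\Phi: M_n(\mathbb{F}) \to M_r(\mathbb{F})$ be an additive map preserving zero products. (a) If $\Phi(I_n)$ is not nilpotent, then $r = n$ or $r = n+1$, and there exist a nonzero $\alpha\in\mathbb{F}$, an invertible $S \in M_r(\mathbb{F})$ and a unital ring endomorphism $\tau$ of $\mathbb{F}$ such that $\Phi(A) = \alpha S(A_\tau \oplus 0_{r-n})S^{-1}$ for all $A\in M_n(\mathbb{F})$. (b) If $\Phi(I_n)$ is nilpotent, and (in case $\mathbb{F}$ is an infinite field of characteristic $2$) $\Phi$ is $\mathbb{F}$-linear, then $\Phi(A)\Phi(B) = 0$ for all $A,B \in M_n(\mathbb{F})$.
   Context: A map $\Phi$ preserves zero products if $\Phi(A)\Phi(B)=0$ whenever $AB=0$. For a ring endomorphism $\tau$ of $\mathbb{F}$ and $A=[a_{ij}]$, $A_\tau = [\tau(a_{ij})]$. *)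

From HB Require Import structures.
From mathcomp Require Import all_boot all_order all_algebra.
Set Implicit Arguments. Unset Strict Implicit. Unset Printing Implicit Defensive.
Import GRing.Theory.
Local Open Scope ring_scope.

Definition mx_nilpotent (F : fieldType) (r : nat) (M : 'M[F]_r) : Prop :=
  exists k : nat, iter k (mulmx M) 1%:M = 0.

Definition preserves_zero_products (F : fieldType) (n r : nat)
  (Phi : 'M[F]_n -> 'M[F]_r) : Prop :=
  forall A B : 'M[F]_n, A *m B = 0 -> Phi A *m Phi B = 0.

Definition additive_map (F : fieldType) (n r : nat)
  (Phi : 'M[F]_n -> 'M[F]_r) : Prop :=
  forall A B : 'M[F]_n, Phi (A + B) = Phi A + Phi B.

Definition F_linear_map (F : fieldType) (n r : nat)
  (Phi : 'M[F]_n -> 'M[F]_r) : Prop :=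
  forall (a : F) (A : 'M[F]_n), Phi (a *: A) = a *: Phi A.

Definition finite_field (F : fieldType) : Prop :=
  exists s : seq F, forall x : F, x \in s.

From HB Require Import structures.
From mathcomp Require Import all_boot all_order all_algebra.
From mathcomp Require Import zify ring.
Import GRing.Theory.
Local Open Scope ring_scope.
Set Implicit Arguments. Unset Strict Implicit. Unset Printing Implicit Defensive.

(* For n >= 2, M_n(F) is additively generated by products of idempotents, and expanding
   Phi(xe) Phi(y - ey) = 0 = Phi(x - xe) Phi(ey) for an idempotent e shows that
   Phi(xa) Phi(y) = Phi(x) Phi(ay) for every a. Hence Phi(A) Phi(B) = W Phi(AB) = Phi(AB) W
   with W = Phi(1).
   The rest is dimension counting in F^r with r <= n + 1: whenever x W^(m+1) kills the image
   of Phi but x W^m does not, one finds n + 2 independent vectors. So a row vector killed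
   after some power of W kills the image of Phi already, which gives (b).
   If W is not nilpotent, W^k P != 0 for P = Phi(E_11), the image of W P is a line F d, and
   d Phi(a E_11) = alpha tau(a) d with tau a ring endomorphism. The rows u_k = d Phi(E_1k)
   satisfy U Phi(A) = alpha A_tau U and are independent, and they are completed to a basis
   by r - n vectors killing the image of Phi. *)

Lemma mx_nilpotentP (F : fieldType) r (M : 'M[F]_r) :
  mx_nilpotent M <-> exists k, M ^+ k = 0.
Proof.
have iterE k : iter k (mulmx M) 1%:M = M ^+ k.
  by elim: k => // k IH; rewrite iterS IH exprS.
by split=> -[k hk]; exists k; rewrite ?iterE in hk *.
Qed.

Section MatrixProducts.
Variables (R : pzSemiRingType) (r : nat).

Lemma mulmx_exprS (M : 'M[R]_r) k : M ^+ k.+1 = M *m M ^+ k.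
Proof. exact: exprS. Qed.

Lemma mulmx_exprSr (M : 'M[R]_r) k : M ^+ k.+1 = M ^+ k *m M.
Proof. exact: exprSr. Qed.

Lemma mulmx_rV_eq0 m (M : 'M[R]_(r, m)) : (forall x : 'rV_r, x *m M = 0) -> M = 0.
Proof. by move=> H; apply/row_matrixP => i; rewrite row0 rowE H. Qed.

Lemma mulmx_rows k (y : 'I_k -> 'rV[R]_r) m (M : 'M[R]_(r, m)) :
  (\matrix_i y i) *m M = \matrix_i (y i *m M).
Proof. by apply/row_matrixP => i; rewrite row_mul !rowK. Qed.

Lemma mulmx_single_row k (c : 'rV[R]_k) (l : 'I_k) (z : 'rV[R]_r) :
  c *m (\matrix_i (if i == l then z else 0)) = c 0 l *: z.
Proof.
rewrite mulmx_sum_row (bigD1 l) //= rowK eqxx big1 ?addr0 // => i /negbTE il.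
by rewrite rowK il scaler0.
Qed.

End MatrixProducts.

Section RowIndependence.
Variables (F : fieldType) (r : nat).

Lemma free_rows_leq k (Y : 'M[F]_(k, r)) :
  (forall c : 'rV_k, c *m Y = 0 -> c = 0) -> (k <= r)%N.
Proof. by move/inj_row_free/eqP <-; exact: rank_leq_col. Qed.

Lemma free_rows_cons2_leq k (Y : 'M[F]_(k, r)) (z x : 'rV[F]_r) :
  (forall (c : 'rV_k) (a b : F), c *m Y + a *: z + b *: x = 0 ->
     [/\ c = 0, a = 0 & b = 0]) ->
  (k.+2 <= r)%N.
Proof.
move=> H; suff: (k + 1 + 1 <= r)%N by rewrite !addn1.
apply: (@free_rows_leq _ (col_mx (col_mx Y z) x)) => u.
rewrite -[u]hsubmxK -[lsubmx u]hsubmxK !mul_row_col.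
rewrite [rsubmx (lsubmx u)]mx11_scalar [rsubmx u]mx11_scalar !mul_scalar_mx.
by case/H => -> -> ->; rewrite !raddf0 !row_mx0.
Qed.

Lemma free_rows_pair_leq k (Y1 Y2 : 'M[F]_(k, r)) :
  (forall c1 c2 : 'rV_k, c1 *m Y1 + c2 *m Y2 = 0 -> c1 = 0 /\ c2 = 0) ->
  (k + k <= r)%N.
Proof.
move=> H; apply: (@free_rows_leq _ (col_mx Y1 Y2)) => u.
by rewrite -[u]hsubmxK mul_row_col => /H [-> ->]; rewrite row_mx0.
Qed.

Lemma block_similarity n m (Hr : (n + m)%N = r) (U : 'M[F]_(n, r)) (K : 'M[F]_(m, r)) :
  row_free (col_mx U K) ->
  exists2 S : 'M[F]_r, S \in unitmx &
    forall (X : 'M_r) (B : 'M_n) (a : F), U *m X = a *: (B *m U) -> K *m X = 0 ->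
      X = a *: (S *m castmx (Hr, Hr) (block_mx B 0 0 (0 : 'M_m)) *m invmx S).
Proof.
case: r / Hr U K => U K freeUK.
have UK_unit : col_mx U K \in unitmx by rewrite -row_free_unit.
exists (invmx (col_mx U K)); first by rewrite unitmx_inv.
move=> X B a UX KX; rewrite castmx_id invmxK -[X](mulKmx UK_unit) mul_col_mx UX KX.
by rewrite -!mulmxA mul_block_col !mul0mx !addr0 [RHS]scalemxAr scale_col_mx scaler0.
Qed.

End RowIndependence.

Definition standard_form (F : fieldType) n r (Phi : 'M[F]_n -> 'M[F]_r) :=
  exists (Hr : (n + (r - n))%N = r) (alpha : F) (S : 'M[F]_r)
         (tau : {rmorphism F -> F}),
    [/\ alpha != 0, S \in unitmx &
        forall A : 'M[F]_n,
          Phi A = alpha *: (S *m castmx (Hr, Hr)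
                     (block_mx (map_mx tau A) 0 0 (0 : 'M[F]_(r - n)))
                   *m invmx S)].

Section ZeroProductPreserver.
Variables (F : fieldType) (n r : nat) (Phi : 'M[F]_n -> 'M[F]_r).
Hypothesis Phi_add : additive_map Phi.
Local Notation E := (@delta_mx F n n).
Local Notation W := (Phi 1%:M).

Lemma Phi0 : Phi 0 = 0.
Proof. by apply: (addrI (Phi 0)); rewrite -Phi_add !addr0. Qed.

Lemma PhiB A B : Phi (A - B) = Phi A - Phi B.
Proof. by apply: (addIr (Phi B)); rewrite -Phi_add !subrK. Qed.

Lemma Phi_sum I (s : seq I) (P : pred I) (f : I -> 'M_n) :
  Phi (\sum_(i <- s | P i) f i) = \sum_(i <- s | P i) Phi (f i).
Proof. exact: (big_morph Phi Phi_add Phi0). Qed.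

Lemma Phi_sum_delta A : Phi A = \sum_i \sum_j Phi (A i j *: E i j).
Proof.
by rewrite {1}(matrix_sum_delta A) Phi_sum; apply: eq_bigr => i _; rewrite Phi_sum.
Qed.

Lemma Phi1_sum : W = \sum_i Phi (E i i).
Proof. by rewrite mx1_sum_delta Phi_sum. Qed.

Lemma exists_delta_neq0 (y : 'rV_r) C :
  y *m Phi C != 0 -> exists i j, y *m Phi (C i j *: E i j) != 0.
Proof.
move=> nz; have /existsP[i /existsP[j nzij]] :
    [exists i, exists j, y *m Phi (C i j *: E i j) != 0].
  apply: contraNT nz => /existsPn H; rewrite (Phi_sum_delta C) mulmx_sumr.
  rewrite big1 // => i _; rewrite mulmx_sumr big1 // => j _.
  by apply/eqP; move: (H i) => /existsPn /(_ j) /negPn.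
by exists i, j.
Qed.

Hypothesis Phi_zp : preserves_zero_products Phi.

Definition balanced (a : 'M[F]_n) :=
  forall x y, Phi (x *m a) *m Phi y = Phi x *m Phi (a *m y).

Lemma balanced_idem e : e *m e = e -> balanced e.
Proof.
move=> ee x y; have /eqP : Phi (x *m e) *m Phi (y - e *m y) = 0.
  by apply: Phi_zp; rewrite mulmxBr !mulmxA -(mulmxA x e e) ee subrr.
rewrite PhiB mulmxBr subr_eq0 => /eqP ->.
have /eqP : Phi (x - x *m e) *m Phi (e *m y) = 0.
  by apply: Phi_zp; rewrite mulmxBl !mulmxA -(mulmxA x e e) ee subrr.
by rewrite PhiB mulmxBl subr_eq0 => /eqP ->.
Qed.

Lemma balancedD a b : balanced a -> balanced b -> balanced (a + b).
Proof.
move=> ha hb x y; move: (ha x y) (hb x y).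
by rewrite mulmxDr mulmxDl !Phi_add mulmxDl mulmxDr => -> ->.
Qed.

Lemma balancedB a b : balanced a -> balanced b -> balanced (a - b).
Proof.
move=> ha hb x y; move: (ha x y) (hb x y).
by rewrite mulmxBr mulmxBl !PhiB mulmxBl mulmxBr => -> ->.
Qed.

Lemma balancedM a b : balanced a -> balanced b -> balanced (a *m b).
Proof. by move=> ha hb x y; rewrite mulmxA hb ha mulmxA. Qed.

Lemma balanced_sum I (s : seq I) (P : pred I) (f : I -> 'M_n) :
  (forall i, P i -> balanced (f i)) -> balanced (\sum_(i <- s | P i) f i).
Proof.
by move=> H; apply: big_ind => //; [apply: balanced_idem; rewrite mulmx0 | exact: balancedD].
Qed.

Lemma balanced_offdiag (i j : 'I_n) c : i != j -> balanced (c *: E i j).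
Proof.
move=> /negbTE ij; set e := E i i + c *: E i j.
have ee : e *m e = e.
  rewrite mulmxDl !mulmxDr -!scalemxAl -!scalemxAr !mul_delta_mx_cond eqxx eq_sym ij.
  by rewrite !mulr1n !mulr0n !scaler0 !addr0.
have -> : c *: E i j = e - E i i by rewrite addrC addKr.
by apply: balancedB; apply: balanced_idem; rewrite // mul_delta_mx.
Qed.

Hypothesis n_gt1 : (1 < n)%N.

Lemma balanced_diag (i : 'I_n) c : balanced (c *: E i i).
Proof.
have [j ij] : exists j : 'I_n, i != j.
  have [-> | ne] := eqVneq i (Ordinal n_gt1); last by exists (Ordinal n_gt1).
  by exists (Ordinal (ltnW n_gt1)); rewrite -val_eqE.
have -> : c *: E i i = (c *: E i j) *m E j i by rewrite -scalemxAl mul_delta_mx.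
by apply: balancedM; rewrite -1?[E j i]scale1r; apply: balanced_offdiag; rewrite // eq_sym.
Qed.

Lemma balancedT A : balanced A.
Proof.
rewrite (matrix_sum_delta A); apply: balanced_sum => i _; apply: balanced_sum => j _.
by case: (eqVneq i j) => [->|]; [exact: balanced_diag | exact: balanced_offdiag].
Qed.

Lemma Phi_mulmx A B : Phi A *m Phi B = W *m Phi (A *m B).
Proof. by have := balancedT A 1%:M B; rewrite mul1mx. Qed.

Lemma Phi_mulmx_r A B : Phi A *m Phi B = Phi (A *m B) *m W.
Proof. by have := balancedT B A 1%:M; rewrite mulmx1 => <-. Qed.

Lemma Phi1_comm A : W *m Phi A = Phi A *m W.
Proof. by rewrite Phi_mulmx_r mul1mx. Qed.

Lemma Phi1X_comm k A : Phi A *m W ^+ k = W ^+ k *m Phi A.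
Proof. by apply: commrX; rewrite /GRing.comm -mulmxE Phi1_comm. Qed.

(* The rows [x W^m Phi(a E_ik)], [z = x W^(m+1) Phi(a E_ij)] and [x] are independent:
   [Phi(E_lj)] isolates the coefficient of the [l]-th row, and [Phi(D) W] kills all but [x]. *)
Lemma power_gap_dim_leq (x : 'rV_r) m C :
  x *m W ^+ m.+1 *m Phi C != 0 -> (forall A, x *m W ^+ m.+2 *m Phi A = 0) ->
  (n.+2 <= r)%N.
Proof.
move=> /exists_delta_neq0[i [j]]; set a := C i j => z_neq0 kill.
set X := x *m W ^+ m.
set z := x *m W ^+ m.+1 *m Phi (a *: E i j) in z_neq0.
have xW : x *m W ^+ m.+1 = X *m W by rewrite mulmx_exprSr mulmxA.
have zPhi B : z *m Phi B = 0.
  by rewrite /z -mulmxA Phi_mulmx mulmxA -(mulmxA x) -mulmx_exprSr kill.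
pose y k := X *m Phi (a *: E i k).
have yPhi k l : y k *m Phi (E l j) = if k == l then z else 0.
  rewrite /y -mulmxA Phi_mulmx mulmxA -xW -scalemxAl mul_delta_mx_cond.
  by have [//|_] := eqVneq k l; rewrite mulr0n scaler0 Phi0 mulmx0.
have yPhiW k D : y k *m Phi D *m W = 0.
  rewrite /y -(mulmxA X) Phi_mulmx mulmxA -xW -mulmxA -Phi1_comm mulmxA.
  by rewrite -(mulmxA x) -mulmx_exprSr kill.
apply: (@free_rows_cons2_leq _ _ _ (\matrix_k y k) z x) => c c0 f h.
have f0 : f = 0.
  have [//|fn0] := eqVneq f 0; case/negP: z_neq0; apply/eqP.
  rewrite /z -mulmxA -Phi1X_comm mulmxA mulmx_exprS mulmxA.
  suff -> : x *m Phi (a *: E i j) *m W = 0 by rewrite mul0mx.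
  have := congr1 (mulmx^~ (Phi (a *: E i j) *m W)) h.
  rewrite !mulmxDl mul0mx -mulmxA mulmx_rows.
  have -> : \matrix_k (y k *m (Phi (a *: E i j) *m W)) = 0.
    by apply/row_matrixP => k; rewrite rowK row0 mulmxA yPhiW.
  rewrite mulmx0 add0r -!scalemxAl mulmxA zPhi mul0mx scaler0 add0r => /eqP.
  by rewrite scaler_eq0 (negbTE fn0) mulmxA => /eqP.
have c_0 : c = 0.
  apply/rowP => l; rewrite mxE.
  have := congr1 (mulmx^~ (Phi (E l j))) h.
  rewrite f0 scale0r addr0 !mulmxDl mul0mx -mulmxA mulmx_rows.
  have -> : \matrix_k (y k *m Phi (E l j)) = \matrix_k (if k == l then z else 0).
    by apply/row_matrixP => k; rewrite !rowK yPhi.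
  rewrite mulmx_single_row -scalemxAl zPhi scaler0 addr0 => /eqP.
  by rewrite scaler_eq0 (negbTE z_neq0) orbF => /eqP.
split => //; apply/eqP; move: h; rewrite c_0 f0 mul0mx add0r scale0r addr0 => /eqP.
by rewrite scaler_eq0 (negbTE z_neq0) orbF.
Qed.

Hypothesis r_le : (r <= n.+1)%N.

Lemma kill_power_down (x : 'rV_r) k :
  (forall A, x *m W ^+ k.+1 *m Phi A = 0) -> forall A, x *m W *m Phi A = 0.
Proof.
elim: k => [|k IH] kill; first exact: kill.
apply: IH => A; apply/eqP; apply: contraT => nz.
by have := power_gap_dim_leq nz kill; rewrite ltnNge r_le.
Qed.

Lemma nilpotent_Phi_mulmx_eq0 : mx_nilpotent W -> forall A B, Phi A *m Phi B = 0.
Proof.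
move=> /mx_nilpotentP[k Wk0] A B; rewrite Phi_mulmx; apply: mulmx_rV_eq0 => x.
rewrite mulmxA; apply: (@kill_power_down x k) => D.
by rewrite mulmx_exprSr Wk0 mul0mx mulmx0 mul0mx.
Qed.

Section NonNilpotent.
Hypothesis W_nonnil : ~ mx_nilpotent W.

Let e0 : 'I_n := Ordinal (ltnW n_gt1).
Local Notation P := (Phi (E e0 e0)).

Lemma Phi_delta_P (i : 'I_n) : Phi (E i e0) *m P = W *m Phi (E i e0).
Proof. by rewrite Phi_mulmx mul_delta_mx. Qed.

Lemma Phi1X_P_neq0 k : W ^+ k *m P != 0.
Proof.
apply/eqP => WkP; apply: W_nonnil; apply/mx_nilpotentP; exists k.+3.
rewrite mulmx_exprSr [X in _ *m X]Phi1_sum mulmx_sumr big1 // => i _.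
have := congr1 (fun M => Phi (E i e0) *m M *m Phi (E e0 i)) WkP.
rewrite mulmx0 mul0mx mulmxA Phi1X_comm -(mulmxA (W ^+ k)) Phi_delta_P mulmxA.
rewrite -mulmxA Phi_mulmx mul_delta_mx => <-.
by rewrite !mulmx_exprSr -!mulmxA.
Qed.

Section RankOne.
Variables (x0 : 'rV[F]_r) (j0 : 'I_r).
Let d := x0 *m (W *m P).
Hypothesis d_j0 : d 0 j0 != 0.

Lemma d_neq0 : d != 0.
Proof. by apply: contraNneq d_j0 => ->; rewrite mxE. Qed.

Let coef (y : 'rV[F]_r) := y 0 j0 / d 0 j0.

Lemma coefZ a : coef (a *: d) = a.
Proof. by rewrite /coef mxE mulfK. Qed.

Lemma coefD y1 y2 : coef (y1 + y2) = coef y1 + coef y2.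
Proof. by rewrite /coef mxE mulrDl. Qed.

Lemma coefK y : (exists a, y = a *: d) -> y = coef y *: d.
Proof. by case=> a ->; rewrite coefZ. Qed.

Lemma free_d_pair (e : 'rV_r) a b :
  e != coef e *: d -> a *: d + b *: e = 0 -> a = 0 /\ b = 0.
Proof.
move=> e_out h; have b0 : b = 0.
  apply: contraNeq e_out => bn0; apply/eqP/coefK; exists (- a / b).
  apply: (scalerI bn0); rewrite scalerA mulrC divfK // scaleNr.
  by apply/eqP; rewrite -addr_eq0 addrC h.
split => //; move: h; rewrite b0 scale0r addr0 => /eqP.
by rewrite scaler_eq0 (negbTE d_neq0) orbF => /eqP.
Qed.

Lemma Phi1_P_rank1 y : y *m (W *m P) = coef (y *m (W *m P)) *: d.
Proof.
set e := y *m (W *m P); have [//|e_out] := eqVneq e (coef e *: d).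
suff: (n + n <= r)%N by move: n_gt1 r_le; clear; lia.
pose rows z := \matrix_(k < n) (z *m Phi (E e0 k)).
have rowsPhi z l :
    rows z *m Phi (E l e0) = \matrix_k (if k == l then z *m (W *m P) else 0).
  rewrite /rows mulmx_rows; apply/row_matrixP => k; rewrite !rowK -mulmxA Phi_mulmx.
  by rewrite mul_delta_mx_cond; case: eqP => _; rewrite ?mulr1n ?mulr0n ?Phi0 ?mulmx0.
apply: (@free_rows_pair_leq _ _ _ (rows x0) (rows y)) => c1 c2 h.
suff H l : c1 0 l = 0 /\ c2 0 l = 0.
  by split; apply/rowP => l; rewrite mxE; case: (H l).
apply: (free_d_pair e_out); have := congr1 (mulmx^~ (Phi (E l e0))) h.
by rewrite mulmxDl mul0mx -!mulmxA !rowsPhi !mulmx_single_row.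
Qed.

Lemma P_sqr : P *m P = W *m P.
Proof. by rewrite Phi_mulmx mul_delta_mx. Qed.

Let alpha := coef (d *m P).

Lemma dP : d *m P = alpha *: d.
Proof.
apply: coefK; exists (coef (x0 *m P *m (W *m P))).
rewrite -Phi1_P_rank1 /d -!mulmxA; congr (x0 *m _).
by rewrite !mulmxA Phi1_comm.
Qed.

Lemma dW : d *m W = d *m P.
Proof. by rewrite /d -!mulmxA -Phi1_comm -P_sqr. Qed.

Lemma alpha_neq0 : alpha != 0.
Proof.
apply/eqP => a0; move/eqP: (Phi1X_P_neq0 2); apply; apply: mulmx_rV_eq0 => y.
rewrite mulmx_exprS expr1 -mulmxA -P_sqr [W *m _]mulmxA mulmxA Phi1_P_rank1.
by rewrite -scalemxAl dP a0 scale0r scaler0.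
Qed.

Let sigma a := coef (d *m Phi (a *: E e0 e0)).

Lemma d_Phi a : d *m Phi (a *: E e0 e0) = sigma a *: d.
Proof.
apply: coefK; exists (coef (x0 *m Phi (a *: E e0 e0) *m (W *m P))).
rewrite -Phi1_P_rank1 /d -!mulmxA; congr (x0 *m _).
have -> : P *m Phi (a *: E e0 e0) = Phi (a *: E e0 e0) *m P.
  by rewrite Phi_mulmx [RHS]Phi_mulmx_r -scalemxAr -scalemxAl !mul_delta_mx Phi1_comm.
by rewrite !mulmxA Phi1_comm.
Qed.

Lemma sigma0 : sigma 0 = 0.
Proof. by rewrite /sigma scale0r Phi0 mulmx0 -(scale0r d) coefZ. Qed.

Lemma sigma1 : sigma 1 = alpha.
Proof. by rewrite /sigma scale1r. Qed.

Lemma sigmaD a b : sigma (a + b) = sigma a + sigma b.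
Proof. by rewrite /sigma scalerDl Phi_add mulmxDr coefD. Qed.

Lemma sigmaM a b : alpha * sigma (a * b) = sigma a * sigma b.
Proof.
rewrite -[RHS]coefZ -scalerA -d_Phi scalemxAl -d_Phi -mulmxA Phi_mulmx mulmxA dW dP.
rewrite -scalemxAl -scalemxAl -scalemxAr mul_delta_mx scalerA d_Phi scalerA.
by rewrite coefZ.
Qed.

Definition tau_fun a := sigma a / alpha.

Lemma tau_fun_nmod : nmod_morphism tau_fun.
Proof. by split=> [|a b]; rewrite /tau_fun ?sigma0 ?mul0r // sigmaD mulrDl. Qed.

Lemma tau_fun_monoid : monoid_morphism tau_fun.
Proof.
split=> [|a b]; first by rewrite /tau_fun sigma1 divff ?alpha_neq0.
rewrite /tau_fun -[sigma (a * b)](mulKf alpha_neq0) sigmaM.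
by field; exact: alpha_neq0.
Qed.

HB.instance Definition _ := GRing.isNmodMorphism.Build F F tau_fun tau_fun_nmod.
HB.instance Definition _ := GRing.isMonoidMorphism.Build F F tau_fun tau_fun_monoid.
Definition tau : {rmorphism F -> F} := tau_fun.

Let u (k : 'I_n) := d *m Phi (E e0 k).

Lemma u_Phi_delta (i j k : 'I_n) a :
  u i *m Phi (a *: E j k) = if i == j then sigma a *: u k else 0.
Proof.
rewrite /u -mulmxA Phi_mulmx mulmxA dW dP -scalemxAl -scalemxAr mul_delta_mx_cond.
have [_|_] := eqVneq i j; last by rewrite mulr0n scaler0 Phi0 mulmx0 scaler0.
rewrite mulr1n /= /u [RHS]scalemxAl -d_Phi -mulmxA Phi_mulmx mulmxA dW dP.
by rewrite -!scalemxAl mul_delta_mx.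
Qed.

Lemma u_Phi i A : u i *m Phi A = \sum_k sigma (A i k) *: u k.
Proof.
rewrite (Phi_sum_delta A) mulmx_sumr (bigD1 i) //= [X in _ + X]big1 ?addr0 => [|j ji].
  by rewrite mulmx_sumr; apply: eq_bigr => k _; rewrite u_Phi_delta eqxx.
by rewrite mulmx_sumr big1 // => k _; rewrite u_Phi_delta eq_sym (negbTE ji).
Qed.

Let U := \matrix_(k < n) u k.

Lemma U_Phi A : U *m Phi A = alpha *: (map_mx tau A *m U).
Proof.
apply/row_matrixP => i; rewrite row_mul linearZ /= row_mul rowK u_Phi mulmx_sum_row.
rewrite scaler_sumr; apply: eq_bigr => k _; rewrite rowK scalerA !mxE.
by rewrite /= /tau_fun mulrC divfK ?alpha_neq0.
Qed.

Lemma mulmxU_eq0 (c : 'rV_n) : (forall l, c *m U *m Phi (E l e0) = 0) -> c = 0.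
Proof.
move=> cU; apply/rowP => l; rewrite mxE; have := cU l; rewrite -mulmxA mulmx_rows.
have -> : \matrix_(k < n) (u k *m Phi (E l e0)) =
          \matrix_(k < n) (if k == l then alpha *: u e0 else 0).
  by apply/row_matrixP => k; rewrite !rowK -[E l e0]scale1r u_Phi_delta sigma1.
rewrite mulmx_single_row /u dP !scalerA => /eqP; rewrite scaler_eq0 (negbTE d_neq0) orbF.
by rewrite -mulrA mulf_eq0 (negbTE (mulf_neq0 alpha_neq0 alpha_neq0)) orbF => /eqP.
Qed.

Lemma base_gap_dim_leq (x : 'rV_r) C :
  x *m Phi C != 0 -> (forall A, x *m W *m Phi A = 0) -> (n.+2 <= r)%N.
Proof.
set z := x *m Phi C => z_neq0 kill.
apply: (@free_rows_cons2_leq _ _ _ U z x) => c a b h.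
have zW : z *m W = 0 by rewrite /z -mulmxA -Phi1_comm mulmxA kill.
have xWW : x *m W *m W = 0 by rewrite kill.
have UW : U *m W = alpha *: U by rewrite U_Phi map_scalar_mx rmorph1 mul1mx.
have c0 : c = 0.
  apply: mulmxU_eq0 => l; suff -> : c *m U = 0 by rewrite mul0mx.
  have := congr1 (fun v => v *m W *m W) h.
  rewrite !mulmxDl -!scalemxAl zW xWW !mul0mx !scaler0 !addr0.
  rewrite -(mulmxA c U) UW -scalemxAr -scalemxAl -(mulmxA c U) UW -scalemxAr scalerA.
  by move/eqP; rewrite scaler_eq0 (negbTE (mulf_neq0 alpha_neq0 alpha_neq0)) => /eqP.
have zz : z *m Phi C = 0 by rewrite /z -mulmxA Phi_mulmx mulmxA kill.
have b0 : b = 0.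
  have := congr1 (mulmx^~ (Phi C)) h.
  rewrite c0 mul0mx add0r !mulmxDl -!scalemxAl zz scaler0 add0r mul0mx => /eqP.
  by rewrite scaler_eq0 (negbTE z_neq0) orbF => /eqP.
split => //; apply/eqP; move: h; rewrite c0 b0 mul0mx add0r scale0r addr0 => /eqP.
by rewrite scaler_eq0 (negbTE z_neq0) orbF.
Qed.

Lemma kill_power_all (x : 'rV_r) k :
  (forall A, x *m W ^+ k *m Phi A = 0) -> forall A, x *m Phi A = 0.
Proof.
case: k => [|k] kill A; first by move: (kill A); rewrite mulmx1.
apply/eqP; apply: contraT => nz.
by have := base_gap_dim_leq nz (kill_power_down kill); rewrite ltnNge r_le.
Qed.

(* [w *m B = 0] says that each [w Phi(E_i e0) W P] has a zero [j0]-coordinate, hence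
   vanishes by [Phi1_P_rank1]; as [B] has [n] columns, such [w] span at least [r - n]
   dimensions, which complete the rows of [U] to a basis. *)
Let B := \matrix_(l < r, i < n) (Phi (E i e0) *m (W *m P)) l j0.

Lemma kill_of_mulmx_B (w : 'rV_r) : w *m B = 0 -> forall A, w *m Phi A = 0.
Proof.
move=> wB; have wi i : w *m Phi (E i e0) *m (W *m P) = 0.
  rewrite Phi1_P_rank1 /coef.
  suff -> : (w *m Phi (E i e0) *m (W *m P)) 0 j0 = 0 by rewrite mul0r scale0r.
  move/rowP/(_ i): wB; rewrite [RHS]mxE => <-; rewrite -mulmxA !mxE /B.
  by apply: eq_bigr => l _; rewrite mxE.
apply: (@kill_power_all w 3) => A.
rewrite (Phi_sum_delta A) !mulmx_sumr big1 // => j _; rewrite mulmx_sumr big1 // => k _.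
have e1 : W *m Phi (A j k *: E j k) = Phi (E j e0) *m Phi (A j k *: E e0 k).
  by rewrite [RHS]Phi_mulmx -scalemxAr mul_delta_mx.
have e2 : Phi (E j e0) *m (W *m P) = W *m (W *m Phi (E j e0)).
  by rewrite mulmxA -Phi1_comm -mulmxA Phi_delta_P.
rewrite !mulmx_exprSr mul1mx -!mulmxA e1 (mulmxA W (Phi (E j e0))) (mulmxA W (W *m _)) -e2.
by rewrite mulmxA mulmxA wi mul0mx.
Qed.

Lemma Phi_similar_block :
  (r = n \/ r = n.+1) /\ standard_form Phi.
Proof.
pose K := row_base (kermx B).
have KPhi A : K *m Phi A = 0.
  have KB : K *m B = 0 by apply/sub_kermxP; rewrite eq_row_base.
  by apply/row_matrixP => i; rewrite row_mul row0 kill_of_mulmx_B // -row_mul KB row0.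
have UK_free : row_free (col_mx U K).
  apply/inj_row_free => v; rewrite -[v]hsubmxK mul_row_col => h.
  have v1 : lsubmx v = 0.
    apply: mulmxU_eq0 => l; have := congr1 (mulmx^~ (Phi (E l e0))) h.
    by rewrite mulmxDl mul0mx -(mulmxA (rsubmx v)) KPhi mulmx0 addr0.
  move: h; rewrite v1 mul0mx add0r -(mul0mx _ K) => /(row_free_inj (row_base_free _)) ->.
  by rewrite row_mx0.
have dimUK : (n + \rank (kermx B) <= r)%N by rewrite -(eqP UK_free) rank_leq_col.
have dimK : (r - n <= \rank (kermx B))%N by rewrite mxrank_ker leq_sub2l ?rank_leq_col.
split; first by move: r_le dimUK; clear; lia.
have rank_K : \rank (kermx B) = (r - n)%N by move: dimUK dimK; clear; lia.
have Hr : (n + \rank (kermx B))%N = r by move: dimUK dimK; clear; lia.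
rewrite /standard_form; case: (r - n)%N / rank_K.
have [S S_unit HS] := block_similarity Hr UK_free.
exists Hr, alpha, S, tau; split => //; first exact: alpha_neq0.
by move=> A; apply: HS; [exact: U_Phi | exact: KPhi].
Qed.

End RankOne.

Lemma nonnilpotent_Phi_form :
  (r = n \/ r = n.+1) /\ standard_form Phi.
Proof.
have /matrix0Pn[i [j0 WP_ij0]] := Phi1X_P_neq0 1.
by rewrite expr1 in WP_ij0; apply: (@Phi_similar_block 'e_i j0); rewrite -rowE mxE.
Qed.

End NonNilpotent.
End ZeroProductPreserver.

Unset Implicit Arguments.

Theorem proposition3p11 (F : fieldType) (n r : nat) (Phi : 'M[F]_n -> 'M[F]_r)
  (hn : n <> 1%N) (hr : (r <= n.+1)%N)
  (hadd : additive_map Phi) (hzp : preserves_zero_products Phi) :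
  (~ mx_nilpotent (Phi 1%:M) ->
     (r = n \/ r = n.+1) /\
     exists (Hr : (n + (r - n))%N = r) (alpha : F) (S : 'M[F]_r)
            (tau : {rmorphism F -> F}),
       [/\ alpha != 0, S \in unitmx &
           forall A : 'M[F]_n,
             Phi A = alpha *: (S *m castmx (Hr, Hr)
                        (block_mx (map_mx tau A) 0 0 (0 : 'M[F]_(r - n)))
                      *m invmx S)])
  /\
  (mx_nilpotent (Phi 1%:M) ->
     ((2%N \in [pchar F]) /\ ~ finite_field F -> F_linear_map Phi) ->
     forall A B : 'M[F]_n, Phi A *m Phi B = 0).
Proof.
case: n Phi hn hr hadd hzp => [|[//|n]] Phi _ hr hadd hzp.
  have Phi_eq0 (A : 'M[F]_0) : Phi A = 0 by rewrite flatmx0 Phi0.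
  split=> [W_nonnil | _ _ A B]; last by rewrite Phi_eq0 mul0mx.
  by case: W_nonnil; exists 1%N; rewrite /= Phi_eq0 mul0mx.
split=> [W_nonnil | W_nil _]; first exact: nonnilpotent_Phi_form.
exact: nilpotent_Phi_mulmx_eq0.
Qed.
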